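(* Let $n\ge 3$, $q=\frac{2n}{n-2}$, $\kappa=\frac{n-1}{n}$. Identify $S^1$ with $[-\pi,\pi]$ with endpoints identified, and let $\lambda=-1$ on $(-\pi,0)$, $\lambda=1$ on $(0,\pi)$. Let $N$ be a smooth positive function on $S^1$, $\gamma_N=-\frac{\int_{S^1}\lambda N}{\int_{S^1}N}$, and $t,\eta,\mu\in\mathbb{R}$. For $d>0$ let $\psi_d$ be the unique positive solution in $W^{2,\infty}(S^1)$ of $$-2\kappa q\,d^{-2q/n}\psi_d''-2\eta^2d^{-2q}\psi_d^{-q-1}-\kappa(\mu d^{-q}+\gamma_N+\lambda)^2\psi_d^{-q-1}+\kappa(t+\lambda)^2\psi_d^{q-1}=0,$$ and let $\mathcal{F}(d)=\psi_d(0)$. Suppose $|t|\neq1$ and let $$M_\infty=\max\left[\left|\frac{1-\gamma_N}{1-t}\right|^{1/q},\left|\frac{1+\gamma_N}{1+t}\right|^{1/q}\right].$$ If $\eta=\mu=0$, then $\mathcal{F}(d)\le M_\infty$ for all $d>0$. Otherwise there is a constant $c>0$ such that $\mathcal{F}(d)\ge c\,d^{-1}$ for all sufficiently small $d>0$. *)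

From HB Require Import structures.
From mathcomp Require Import all_boot all_order all_algebra.
From mathcomp Require Import all_classical all_reals all_analysis.
Set Implicit Arguments. Unset Strict Implicit. Unset Printing Implicit Defensive.
Import Order.TTheory GRing.Theory Num.Theory.
Import numFieldNormedType.Exports.
Local Open Scope classical_set_scope.
Local Open Scope ring_scope.

Section Defs.
Variable R : realType.

(* S^1 = R / 2piZ: functions on S^1 are 2pi-periodic functions on R. *)
Definition periodic2pi (f : R -> R) := forall x : R, f (x + 2 * pi) = f x.

(* lambda = -1 on (-pi,0), +1 on (0,pi) (mod 2pi); the values at multiples of
   pi (a null set) are irrelevant. *)
Definition lam (x : R) : R := if sin x < 0 then -1 else 1.

Definition qexp (n : nat) : R := 2 * n%:R / (n%:R - 2).
Definition kappa (n : nat) : R := (n%:R - 1) / n%:R.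

Definition smooth (f : R -> R) :=
  exists D : nat -> R -> R, D 0%N = f /\
    forall (k : nat) (x : R), is_derive x 1 (D k) (D k.+1 x).

Definition intS1 (f : R -> R) : R :=
  Rintegral (@lebesgue_measure R) `[(- pi)%R, pi]%classic f.

Definition gammaN (N : R -> R) : R := - (intS1 (fun x => lam x * N x) / intS1 N).

(* W^{2,infty}(S^1): periodic C^1 functions whose derivative is Lipschitz
   (W^{1,infty} = Lipschitz). *)
Definition W2inf_S1 (f : R -> R) :=
  periodic2pi f /\ (forall x, derivable f x 1) /\
  exists L : R, forall x y, `|derive1 f x - derive1 f y| <= L * `|x - y|.

(* f solves the ODE of the statement (strong sense, almost everywhere,
   f'' being the a.e. derivative of the Lipschitz function f'). *)
Definition solves_eq (n : nat) (N : R -> R) (t eta mu d : R) (f : R -> R) :=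
  {ae (@lebesgue_measure R), forall x : R,
    derivable (derive1 f) x 1 /\
    - 2 * kappa n * qexp n * d `^ (- (2 * qexp n / n%:R)) * derive1 (derive1 f) x
    - 2 * eta ^+ 2 * d `^ (- (2 * qexp n)) * f x `^ (- qexp n - 1)
    - kappa n * (mu * d `^ (- qexp n) + gammaN N + lam x) ^+ 2
        * f x `^ (- qexp n - 1)
    + kappa n * (t + lam x) ^+ 2 * f x `^ (qexp n - 1) = 0}.

Definition Minf (n : nat) (N : R -> R) (t : R) : R :=
  Num.max (`|(1 - gammaN N) / (1 - t)| `^ (1 / qexp n))
          (`|(1 + gammaN N) / (1 + t)| `^ (1 / qexp n)).

End Defs.

(* Maximum principle on the circle.  Multiplied by [psi^(q+1)], the equation
   says that [psi''] has the sign of [kappa (t + lam)^2 psi^(2q)] minus the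
   remaining (nonnegative) coefficient wherever it holds.  If [eta = mu = 0] and
   [psi > M_infty], this sign is positive, so [psi''] is positive a.e. on
   [{psi > M_infty}], which is impossible near a maximum of [psi].  Otherwise the
   remaining coefficient grows like [d^(-2q)], so for small [d] the function
   [psi''] is negative a.e. on [{psi < c / d}] and the minimum of [psi] cannot lie
   there.  Since [psi'] is only Lipschitz, "[psi'' > 0] a.e." is turned into
   monotonicity of [psi'] by real induction, covering the exceptional null set by
   an open set of small measure. *)

From HB Require Import structures.
From mathcomp Require Import all_boot all_order all_algebra.
From mathcomp Require Import all_classical all_reals all_analysis.
From mathcomp Require Import ring lra measurable_realfun.
Set Implicit Arguments. Unset Strict Implicit. Unset Printing Implicit Defensive.
Import Order.TTheory GRing.Theory Num.Theory.
Import numFieldNormedType.Exports.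
Local Open Scope ring_scope.
Local Open Scope classical_set_scope.

Section RealLine.
Context {R : realType}.
Local Notation mu := (@lebesgue_measure R).

Lemma aeS (P Q : R -> Prop) : (forall x, P x -> Q x) ->
  {ae mu, forall x, P x} -> {ae mu, forall x, Q x}.
Proof. by move=> PQ; apply: (@filterS _ _ (ae_filter_ringOfSetsType mu)). Qed.

(* Real induction: [sup] of the set where [h a <= h x] cannot stop before [b]. *)
Lemma right_local_nondecreasing_le (h : R -> R) (a b K : R) : a <= b -> 0 <= K ->
  (forall x y, x <= y -> h x - K * (y - x) <= h y) ->
  (forall x, a <= x -> x < b -> exists2 d : R, 0 < d &
       forall y, x < y -> y < x + d -> h x <= h y) ->
  h a <= h b.
Proof.
move=> ab K0 hK hloc.
pose S := [set x | a <= x <= b /\ h a <= h x].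
have Sa : S a by rewrite /S /= lexx ab.
have hS : has_sup S by split; [exists a | exists b => x [/andP[]]].
have sS x : S x -> x <= sup S by exact: sup_upper_bound.
have aS : a <= sup S by exact: sS.
have Sb : sup S <= b by apply: ge_sup; [exists a | move=> x [/andP[]]].
have hsup : h a <= h (sup S).
  apply/ler_addgt0Pr => e e0.
  have e1 : 0 < e / (K + 1) by rewrite divr_gt0 // ltr_wpDl.
  have [x [/andP[ax xb] hx] lx] := sup_adherent e1 hS.
  have xS : x <= sup S by apply: sS; rewrite /S /= ax xb.
  have : K * (sup S - x) <= e.
    have /(ler_wpM2l K0) /le_trans -> // : sup S - x <= e / (K + 1) by lra.
    by rewrite mulrA ler_pdivrMr ?ltr_wpDl //; nra.
  have := hK _ _ xS; lra.
have [Sb'|bS] := ltP (sup S) b; last first.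
  by have -> : b = sup S by apply/eqP; rewrite eq_le bS Sb.
have [d d0 hd] := hloc _ aS Sb'.
pose y := sup S + Num.min d (b - sup S) / 2.
have m0 : 0 < Num.min d (b - sup S) by rewrite lt_min d0 subr_gt0 Sb'.
have m1 : Num.min d (b - sup S) <= d by rewrite ge_min lexx.
have m2 : Num.min d (b - sup S) <= b - sup S by rewrite ge_min lexx orbT.
have : S y.
  split; first by apply/andP; split; rewrite /y; lra.
  by apply: (le_trans hsup); apply: hd; rewrite /y; lra.
move/sS; rewrite /y; lra.
Qed.

Lemma derive1_right_lower_bound (g : R -> R) x e : derivable g x 1 -> 0 < e ->
  exists2 d : R, 0 < d & forall y, x < y -> y < x + d ->
    (derive1 g x - e) * (y - x) <= g y - g x.
Proof.
move=> dg e0.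
have : (fun h : R => h^-1 *: (g (h *: 1 + x) - g x)) @ 0^' --> 'D_1 g x by exact: dg.
move/cvgrPdist_lt => /(_ e e0) /nbhs_ballP [d /= d0 hd].
exists d => // y xy yd.
have /hd : ball 0 d (y - x).
  by rewrite /ball /= sub0r normrN gtr0_norm ?subr_gt0 // ltrBlDl.
rewrite subr_eq0 gt_eqF // derive1E [(y - x) *: (1:R)]mulr1 subrK => /(_ isT) H.
rewrite -ler_pdivlMr ?subr_gt0 // (mulrC (g y - g x)).
have := ler_norm ('D_1 g x - (y - x)^-1 *: (g y - g x)); rewrite -[_ *: _]/(_ * _) in H *.
lra.
Qed.

Definition measure_upto (U : set R) (x : R) : R := fine (mu (U `&` `]-oo, x])).

Section MeasureUpTo.
Context {U : set R} {e : R}.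
Hypotheses (mU : measurable U) (muU : (mu U <= e%:E)%E).

Let mUx x : measurable (U `&` `]-oo, x]) := measurableI _ _ mU (measurable_itv _).

Let muUx x : (mu (U `&` `]-oo, x]) <= e%:E)%E.
Proof. exact: le_trans (measureIl mu mU (measurable_itv _)) muU. Qed.

Lemma measure_uptoE x : (measure_upto U x)%:E = mu (U `&` `]-oo, x]).
Proof. by rewrite fineK // ge0_fin_numE ?measure_ge0 // (le_lt_trans (muUx x)) ?ltry. Qed.

Lemma measure_upto_ge0_le x : 0 <= measure_upto U x <= e.
Proof. by rewrite -!lee_fin measure_uptoE measure_ge0 muUx. Qed.

Lemma measure_upto_le x y : x <= y -> measure_upto U x <= measure_upto U y.
Proof.
move=> xy; rewrite -lee_fin !measure_uptoE.
apply: le_measure; rewrite ?inE; [exact: mUx|exact: mUx|].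
by move=> z [Uz]; rewrite /= !in_itv /= => zx; split => //; exact: le_trans xy.
Qed.

Lemma measure_upto_itv x y : x < y -> `]x, y] `<=` U ->
  measure_upto U x + (y - x) <= measure_upto U y.
Proof.
move=> xy sU; rewrite -lee_fin EFinD !measure_uptoE.
have -> : ((y - x)%:E = mu `]x, y])%E by rewrite lebesgue_measure_itv /= lte_fin xy EFinB.
rewrite -measureU; [|exact: mUx|exact: measurable_itv|]; last first.
  rewrite -subset0 => z [[_]]; rewrite /= !in_itv /= => zx /andP[xz _].
  by move: (lt_le_trans xz zx); rewrite ltxx.
apply: le_measure; rewrite ?inE; [|exact: mUx|].
  by apply: measurableU; [exact: mUx|exact: measurable_itv].
move=> z [[Uz]|]; rewrite /= !in_itv /=.
- by move=> zx; split => //; rewrite ?in_itv /= (le_trans zx) // ltW.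
- by move=> /andP[xz zy]; split => //; apply: sU; rewrite /= in_itv /= xz zy.
Qed.

End MeasureUpTo.

(* Perturb [g] by [e1 * x] plus [L] times the measure of an open cover of the
   bad set lying left of [x]: the result is nondecreasing to the right of every
   point, by differentiability off the cover and by Lipschitz continuity on it. *)
Lemma lipschitz_ae_derive_ge0_le (g : R -> R) (L : R) (A : set R) (a b : R) :
  mu.-negligible A ->
  (forall x y, `|g x - g y| <= L * `|x - y|) -> a <= b ->
  (forall x, a <= x -> x <= b -> ~ A x -> derivable g x 1 /\ 0 <= derive1 g x) ->
  g a <= g b.
Proof.
move=> nA gL ab hd.
have L0 : 0 <= L.
  by have := gL 1 0; rewrite subr0 normr1 mulr1; apply: le_trans.
have gLr x y : x <= y -> g x - L * (y - x) <= g y.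
  move=> xy; have := gL x y; rewrite (distrC x y) (ger0_norm (x := y - x)) ?subr_ge0 //.
  have := ler_norm (g x - g y); lra.
apply/ler_addgt0Pr => e e0.
pose e1 := e / (b - a + L + 1).
have e10 : 0 < e1 by rewrite divr_gt0 //; lra.
have le1 : e1 * (b - a + L) <= e.
  have -> : e = e1 * (b - a + L + 1) by rewrite /e1 divfK // gt_eqF //; lra.
  by rewrite ler_wpM2l ?(ltW e10) //; lra.
have [U [oU AU muU]] := outer_measure_open_le A e10.
rewrite (negligible_outer_measure A).1 // add0e in muU.
have mU : measurable U := open_measurable oU.
pose m := measure_upto U.
pose h x := g x + e1 * x + L * m x.
suff : h a <= h b.
  have := measure_upto_ge0_le mU muU a; have := measure_upto_ge0_le mU muU b.
  rewrite /h /m; nra.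
apply: (@right_local_nondecreasing_le h a b L) => //.
  move=> x y xy; have := gLr _ _ xy; have := measure_upto_le mU muU xy.
  rewrite /h /m; nra.
move=> x ax xb; case: (pselect (U x)) => Ux.
  have /nbhs_ballP [r /= r0 hr] := oU x Ux.
  exists r => // y xy yr.
  have sU : `]x, y] `<=` U.
    move=> z; rewrite /= in_itv /= => /andP[xz zy]; apply: hr.
    rewrite /ball /= ltr0_norm ?subr_lt0 //; lra.
  have := measure_upto_itv mU muU xy sU; have := gLr _ _ (ltW xy).
  rewrite /h /m; nra.
have [dg dg0] := hd x ax (ltW xb) (fun Ax => Ux (AU _ Ax)).
have [d d0 hd'] := derive1_right_lower_bound dg e10.
exists d => // y xy yd.
have := hd' y xy yd; have := measure_upto_le mU muU (ltW xy).
rewrite /h /m; nra.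
Qed.

Lemma exists_itvoo_notin_negligible (A : set R) (a b : R) :
  mu.-negligible A -> a < b -> exists2 z, z \in `]a, b[%R & ~ A z.
Proof.
move=> [B [mB muB AB]] ab; apply: contrapT => hz.
have : (mu `]a, b[ <= mu B)%E.
  apply: le_measure; rewrite ?inE; [exact: measurable_itv|exact: mB|].
  by move=> w wi; apply: AB; apply: contrapT => nAw; apply: hz; exists w.
by rewrite muB lebesgue_measure_itv /= lte_fin ab lee_fin subr_le0 leNgt ab.
Qed.

Lemma derive1_itvoo_cst (f : R -> R) (a b c z : R) :
  (forall y, y \in `]a, b[%R -> f y = c) -> z \in `]a, b[%R -> derive1 f z = 0.
Proof.
move=> fc zi; rewrite derive1E (@near_eq_derive _ _ _ f (cst c)) ?derive_cst //.
by near=> y; apply: fc; near: y; exact: near_in_itvoo.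
Unshelve. all: by end_near.
Qed.

Lemma derive1_ge0_local_max_cst (f : R -> R) (a b : R) : a < b ->
  (forall x, derivable f x 1) -> (forall y, a <= y -> y <= b -> 0 <= derive1 f y) ->
  (forall y, a < y -> y < b -> f y <= f a) ->
  forall y, y \in `]a, b[%R -> f y = f a.
Proof.
move=> ab df f'0 fmax y; rewrite in_itv /= => /andP[ay yb].
apply/eqP; rewrite eq_le fmax //=; apply: (@ger0_derive1_le_cc _ f a b).
- by move=> x _; exact: df.
- by move=> x; rewrite in_itv /= => /andP[? ?]; apply: f'0; lra.
- by apply: derivable_within_continuous => x _; exact: df.
- by rewrite in_itv /= lexx ltW.
- by rewrite in_itv /= !ltW.
- exact: ltW.
Qed.

(* A local maximum [x1] forces [f' = 0] at [x1] and [f' >= 0] just right of it,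
   so [f] is constant there and [f''] vanishes on a set of positive measure. *)
Lemma local_max_not_ae_convex (f : R -> R) (m x1 del : R) :
  0 < del ->
  (forall x, derivable f x 1) ->
  (exists L, forall x y, `|derive1 f x - derive1 f y| <= L * `|x - y|) ->
  (forall y, x1 - del < y -> y < x1 + del -> f y <= f x1) ->
  m < f x1 ->
  {ae mu, forall x, m < f x -> derivable (derive1 f) x 1 /\ 0 < derive1 (derive1 f) x} ->
  False.
Proof.
move=> del0 df [L f'L] fmax mf [A [mA muA PA]].
have nA : mu.-negligible A by exists A; split.
have Pz z : ~ A z -> m < f z -> derivable (derive1 f) z 1 /\ 0 < derive1 (derive1 f) z.
  by move=> nAz mz; apply: contrapT => hz; apply/nAz/PA => /= /(_ mz).
have f'x1 : derive1 f x1 = 0.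
  have [_ <-] : is_derive x1 1 f 0.
    apply: (@derive1_at_max _ f (x1 - del) (x1 + del)); first lra.
    - by move=> y _; exact: df.
    - by rewrite in_itv /=; apply/andP; split; lra.
    - by move=> y; rewrite in_itv /= => /andP[? ?]; apply: fmax.
  by rewrite derive1E.
have [r r0 fr] : exists2 r : R, 0 < r & forall y, x1 <= y < x1 + r -> m < f y.
  have cf : f @ x1 --> f x1.
    by apply/differentiable_continuous; rewrite -derivable1_diffP.
  have /nbhs_ballP [r /= r0 hr] : \forall y \near x1, m < f y by exact: cvgr_gt cf _ mf.
  exists r => // y /andP[x1y yr]; apply: hr.
  by rewrite /ball /= ler0_norm ?subr_le0 //; lra.
pose b := x1 + Num.min r del / 2.
have m0 : 0 < Num.min r del by rewrite lt_min r0 del0.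
have mr : Num.min r del <= r by rewrite ge_min lexx.
have md : Num.min r del <= del by rewrite ge_min lexx orbT.
have x1b : x1 < b by rewrite /b ltrDl divr_gt0.
have f'_ge0 y : x1 <= y -> y <= b -> 0 <= derive1 f y.
  move=> x1y yb; rewrite -f'x1.
  apply: (@lipschitz_ae_derive_ge0_le _ L A) => //.
  move=> x x1x xy nAx; have [] := Pz x nAx (fr _ _); last by move=> ? /ltW.
  by rewrite x1x /b /=; rewrite /b in yb; lra.
have fconst : forall y, y \in `]x1, b[%R -> f y = f x1.
  apply: derive1_ge0_local_max_cst x1b df f'_ge0 _ => y x1y yb.
  by apply: fmax; rewrite /b in yb; lra.
have [z zi nAz] := exists_itvoo_notin_negligible nA x1b.
have mz : m < f z.
  apply: fr; move: zi; rewrite in_itv /= => /andP[x1z zb].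
  by rewrite (ltW x1z) /=; rewrite /b in zb; lra.
have [_] := Pz z nAz mz.
by rewrite (derive1_itvoo_cst (fun w wi => derive1_itvoo_cst fconst wi) zi) ltxx.
Qed.

Lemma periodic2pi_local_argmax (f : R -> R) : periodic2pi f -> continuous f ->
  exists x1, f 0 <= f x1 /\ forall y, x1 - pi < y -> y < x1 + pi -> f y <= f x1.
Proof.
move=> per cf; have pi0 := @pi_gt0 R.
have cw : {within `[- (3 * pi), 3 * pi], continuous f} by exact: continuous_subspaceT.
have [c ci cmax] := @EVT_max R f (- (3 * pi)) (3 * pi) ltac:(lra) cw.
move: ci; rewrite in_itv /= => /andP[c1 c2].
have inI y : - (3 * pi) <= y -> y <= 3 * pi -> y \in `[- (3 * pi), 3 * pi]%R.
  by move=> ? ?; rewrite in_itv /=; apply/andP.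
have [x1 [fx1 x1a x1b]] : exists x1, [/\ f x1 = f c, - pi <= x1 & x1 <= pi].
  have [cp|cp] := ltP pi c.
    by exists (c - 2 * pi); split; [rewrite -(per (c - 2 * pi)) subrK|lra|lra].
  have [cn|cn] := ltP c (- pi); first by exists (c + 2 * pi); split; [exact: per|lra|lra].
  by exists c.
exists x1; rewrite fx1; split; first by apply: cmax; apply: inI; lra.
by move=> y y1 y2; apply: cmax; apply: inI; lra.
Qed.

Lemma maximum_principle (f : R -> R) (m : R) : W2inf_S1 f ->
  {ae mu, forall x, m < f x -> derivable (derive1 f) x 1 /\ 0 < derive1 (derive1 f) x} ->
  f 0 <= m.
Proof.
move=> [per [df f'L]] ae; rewrite leNgt; apply/negP => mf0.
have cf : continuous f.
  by move=> x; apply/differentiable_continuous; rewrite -derivable1_diffP.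
have [x1 [f0x1 x1max]] := periodic2pi_local_argmax per cf.
exact: (local_max_not_ae_convex (pi_gt0 R) df f'L x1max (lt_le_trans mf0 f0x1) ae).
Qed.

Lemma W2inf_S1N (f : R -> R) : W2inf_S1 f -> W2inf_S1 (- f).
Proof.
move=> [per [df [L f'L]]]; split; first by move=> x; rewrite !fctE per.
split=> [x|]; first exact: derivableN.
by exists L => x y; rewrite !derive1N // -opprD normrN.
Qed.

Lemma minimum_principle (f : R -> R) (m : R) : W2inf_S1 f ->
  {ae mu, forall x, f x < m -> derivable (derive1 f) x 1 /\ derive1 (derive1 f) x < 0} ->
  m <= f 0.
Proof.
move=> Wf ae; rewrite -lerN2.
have [_ [df _]] := Wf.
have f'N : derive1 (- f) = - derive1 f by apply/funext => x; rewrite derive1N.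
apply: (maximum_principle (W2inf_S1N Wf)).
apply: aeS ae => x Px /=; rewrite ltrN2 => /Px [d2f f''_lt0].
by rewrite f'N derive1N // oppr_gt0; split; first exact: derivableN.
Qed.

End RealLine.

Section Algebra.
Context {R : realType}.

Lemma sqr_lt_of_norm_div_lt (a b P : R) : b != 0 -> `|a / b| < P ->
  a ^+ 2 < P ^+ 2 * b ^+ 2.
Proof.
move=> b0; rewrite normrM normrV ?unitfE // ltr_pdivrMr ?normr_gt0 // => H.
have := normr_ge0 a; have := normr_gt0 b; rewrite b0 => nb na.
by rewrite -(real_normK (num_real a)) -(real_normK (num_real b)); nra.
Qed.

Lemma powR_invK (a q : R) : 0 <= a -> 0 < q -> (a `^ (1 / q)) `^ q = a.
Proof. by move=> a0 q0; rewrite -powRrM mul1r mulVf ?gt_eqF // powRr1. Qed.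

Lemma powR_lt_mul_inv (q C d p : R) : 0 < q -> 0 <= C -> 0 < d -> 0 <= p ->
  p < C `^ (1 / q) * d^-1 -> p `^ q < C * d `^ (- q).
Proof.
move=> q0 C0 d0 p0 pC.
have Cd0 : 0 <= C `^ (1 / q) * d^-1 by rewrite mulr_ge0 ?powR_ge0 // invr_ge0 ltW.
have := @gt0_ltr_powR R q q0 p (C `^ (1 / q) * d^-1); rewrite !nnegrE => /(_ p0 Cd0 pC).
rewrite powRM ?powR_ge0 ?invr_ge0 ?(ltW d0) // powR_invK //.
by rewrite -(powR_inv1 (ltW d0)) -powRrM mulN1r.
Qed.

Lemma powRN_gt_near0 (q X0 : R) : 0 < q ->
  exists2 d0 : R, 0 < d0 & forall d, 0 < d -> d < d0 -> X0 < d `^ (- q).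
Proof.
move=> q0; have X1 : 0 < `|X0| + 1 by rewrite ltr_wpDl.
exists ((`|X0| + 1) `^ (- (1 / q))); first exact: powR_gt0.
move=> d d0 dd0.
have : d `^ q < (`|X0| + 1)^-1.
  have <- : ((`|X0| + 1) `^ (- (1 / q))) `^ q = (`|X0| + 1)^-1.
    by rewrite -powRrM mulNr mul1r mulVf ?lt0r_neq0 // powR_inv1 // ltW.
  by rewrite gt0_ltr_powR ?nnegrE ?powR_ge0 // ltW.
rewrite -ltf_pV2 ?posrE ?powR_gt0 ?invr_gt0 // invrK -powRN.
by have := ler_norm X0; lra.
Qed.

(* If [eta != 0] the [eta] term alone dominates; otherwise
   [|mu X + g| >= |mu| X / 2] as soon as [X > 2 G / |mu|]. *)
Lemma quadratic_domination (k T G eta mu : R) :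
  0 < k -> 0 < T -> 0 <= G -> ~ (eta = 0 /\ mu = 0) ->
  exists2 C : R, 0 < C & exists X0 : R, forall X g P,
    X0 < X -> `|g| <= G -> 0 < P -> P < C * X ->
    k * (T * P) ^+ 2 < 2 * eta ^+ 2 * X ^+ 2 + k * (mu * X + g) ^+ 2.
Proof.
move=> k0 T0 G0 nz; have [eta0|eta0] := eqVneq eta 0.
  have mu0 : 0 < `|mu| by rewrite normr_gt0; apply/eqP => mu0; apply: nz.
  exists (`|mu| / (4 * T)); first by rewrite divr_gt0 // mulr_gt0.
  exists (2 * G / `|mu|) => X g P GX gG P0 PX.
  rewrite ltr_pdivrMr // [X * _]mulrC in GX.
  have X0 : 0 < X by rewrite -(pmulr_rgt0 _ mu0); lra.
  have TPX : T * P < `|mu| * X / 4.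
    have -> : `|mu| * X / 4 = T * (`|mu| / (4 * T) * X) by field; exact: lt0r_neq0.
    by rewrite ltr_pM2l.
  have muXg : `|mu| * X / 2 <= `|mu * X + g|.
    have := ler_normD (mu * X + g) (- g).
    by rewrite normrN addrK normrM (gtr0_norm X0); lra.
  have TP0 : 0 < T * P by rewrite mulr_gt0.
  rewrite eta0 expr0n /= mulr0 mul0r add0r ltr_pM2l // -(real_normK (num_real (mu * X + g))).
  by nra.
have e0 : 0 < `|eta| by rewrite normr_gt0.
exists (`|eta| / (T * (k + 1))); first by rewrite divr_gt0 // mulr_gt0 //; lra.
exists 0 => X g P X0 _ P0 PX.
have kTPX : (k + 1) * (T * P) < `|eta| * X.
  have -> : `|eta| * X = (k + 1) * T * (`|eta| / (T * (k + 1)) * X).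
    by field; apply/andP; split; apply: lt0r_neq0; lra.
  by rewrite -mulrA ltr_pM2l ?ltr_pM2l //; lra.
have TP0 : 0 < T * P by rewrite mulr_gt0.
have sq : ((k + 1) * (T * P)) ^+ 2 < eta ^+ 2 * X ^+ 2.
  rewrite -(real_normK (num_real eta)) -exprMn ltr_pXn2r ?nnegrE // mulr_ge0 //; lra.
have := mulr_ge0 (ltW k0) (sqr_ge0 (mu * X + g)); have := sqr_ge0 (eta * X).
rewrite exprMn; nra.
Qed.

Lemma norm_add_pm1_le (a l : R) : l = 1 \/ l = -1 -> `|a + l| <= `|a| + 1.
Proof. by case=> ->; rewrite (le_trans (ler_normD _ _)) // ?normrN normr1. Qed.

End Algebra.

Section Equation.
Context {R : realType}.
Variables (n : nat) (N : R -> R) (t eta mu : R).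
Hypothesis n3 : (3 <= n)%N.
Local Notation q := (qexp R n).
Local Notation k := (kappa R n).

Lemma qexp_gt0 : 0 < q.
Proof.
have n3R : (3 : R) <= n%:R by rewrite ler_nat.
by rewrite divr_gt0 //; lra.
Qed.

Lemma kappa_gt0 : 0 < k.
Proof.
have n3R : (3 : R) <= n%:R by rewrite ler_nat.
by rewrite divr_gt0 //; lra.
Qed.

Lemma lam_pm1 (x : R) : lam x = 1 \/ lam x = -1.
Proof. by rewrite /lam; case: ifP; [right|left]. Qed.

(* Multiplied by [psi^(q+1)], the equation reads
   [c psi'' psi^(q+1) = pos_coef lam psi^(2q) - neg_coef d lam] with [c > 0]. *)
Definition neg_coef (d l : R) : R :=
  2 * eta ^+ 2 * (d `^ (- q)) ^+ 2 + k * (mu * d `^ (- q) + gammaN N + l) ^+ 2.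

Definition pos_coef (l : R) : R := k * (t + l) ^+ 2.

Lemma equation_identity (d p s l : R) : 0 < d -> 0 < p ->
  - 2 * k * q * d `^ (- (2 * q / n%:R)) * s
    - 2 * eta ^+ 2 * d `^ (- (2 * q)) * p `^ (- q - 1)
    - k * (mu * d `^ (- q) + gammaN N + l) ^+ 2 * p `^ (- q - 1)
    + k * (t + l) ^+ 2 * p `^ (q - 1) = 0 ->
  2 * k * q * d `^ (- (2 * q / n%:R)) * s * (p `^ q * p) =
    pos_coef l * (p `^ q) ^+ 2 - neg_coef d l.
Proof.
move=> d0 p0 E.
have p1 : p `^ 1 = p by rewrite powRr1 // ltW.
have pn0 : p != 0 by rewrite lt0r_neq0.
have Pn0 : p `^ q != 0 by rewrite lt0r_neq0 ?powR_gt0.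
have e1 : p `^ (- q - 1) = (p `^ q * p)^-1.
  by rewrite -opprD powRN powRD ?pn0 ?implybT // p1.
have e2 : p `^ (q - 1) = p `^ q / p by rewrite powRB ?pn0 ?implybT // p1.
have d2 : d `^ (- (2 * q)) = (d `^ (- q)) ^+ 2.
  by rewrite -powR_mulrn ?powR_ge0 // -powRrM mulrC mulNr.
rewrite e1 e2 d2 in E; apply/eqP; rewrite -subr_eq0 -oppr_eq0; apply/eqP.
rewrite -(mul0r (p `^ q * p)) -E /pos_coef /neg_coef; field.
by rewrite pn0 Pn0.
Qed.

Section Solution.
Variables (d : R) (f : R -> R).
Hypotheses (d0 : 0 < d) (f0 : forall x, 0 < f x) (Ef : solves_eq n N t eta mu d f).

Let c0 : 0 < 2 * k * q * d `^ (- (2 * q / n%:R)).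
Proof.
by rewrite pmulr_lgt0 ?powR_gt0 // pmulr_lgt0 ?qexp_gt0 // pmulr_lgt0 ?kappa_gt0.
Qed.

Lemma solves_eq_ae_convex : {ae lebesgue_measure, forall x,
  neg_coef d (lam x) < pos_coef (lam x) * (f x `^ q) ^+ 2 ->
  derivable (derive1 f) x 1 /\ 0 < derive1 (derive1 f) x}.
Proof.
apply: aeS Ef => x /= [d2f E] lt.
split=> //; rewrite -subr_gt0 -(equation_identity d0 (f0 x) E) in lt.
have Pp : 0 < f x `^ q * f x by rewrite mulr_gt0 ?powR_gt0.
by move: lt; rewrite (pmulr_lgt0 _ Pp) (pmulr_rgt0 _ c0).
Qed.

Lemma solves_eq_ae_concave : {ae lebesgue_measure, forall x,
  pos_coef (lam x) * (f x `^ q) ^+ 2 < neg_coef d (lam x) ->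
  derivable (derive1 f) x 1 /\ derive1 (derive1 f) x < 0}.
Proof.
apply: aeS Ef => x /= [d2f E] lt.
split=> //; rewrite -subr_lt0 -(equation_identity d0 (f0 x) E) in lt.
have Pp : 0 < f x `^ q * f x by rewrite mulr_gt0 ?powR_gt0.
by move: lt; rewrite (pmulr_llt0 _ Pp) (pmulr_rlt0 _ c0).
Qed.

End Solution.

Lemma Minf_lt_sqr (p l : R) : `|t| != 1 -> l = 1 \/ l = -1 -> Minf n N t < p ->
  (gammaN N + l) ^+ 2 < (p `^ q) ^+ 2 * (t + l) ^+ 2.
Proof.
move=> t1 hl; rewrite /Minf gt_max => /andP[h1 h2].
have key a b : b != 0 -> `|a / b| `^ (1 / q) < p -> a ^+ 2 < (p `^ q) ^+ 2 * b ^+ 2.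
  move=> b0 abp; apply: sqr_lt_of_norm_div_lt b0 _.
  rewrite -(powR_invK (normr_ge0 (a / b)) qexp_gt0).
  have p0 : 0 <= p := le_trans (powR_ge0 _ _) (ltW abp).
  by apply: gt0_ltr_powR abp; rewrite ?qexp_gt0 // nnegrE ?powR_ge0.
case: hl => ->.
  rewrite ![_ + 1]addrC; apply: key h2.
  apply: contraNneq t1 => h; have -> : t = -1 by lra.
  by rewrite normrN normr1.
have sqrB1 a : (a + -1) ^+ 2 = (1 - a) ^+ 2 by rewrite -sqrrN opprD opprK addrC.
rewrite !sqrB1; apply: key h1.
apply: contraNneq t1 => h; have -> : t = 1 by lra.
by rewrite normr1.
Qed.

Lemma solution_le_Minf (d : R) (f : R -> R) :
  eta = 0 -> mu = 0 -> `|t| != 1 -> 0 < d -> (forall x, 0 < f x) ->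
  W2inf_S1 f -> solves_eq n N t eta mu d f -> f 0 <= Minf n N t.
Proof.
move=> eta0 mu0 t1 d0 f0 Wf Ef; apply: (maximum_principle Wf).
apply: aeS (solves_eq_ae_convex d0 f0 Ef) => x /= convex fx; apply: convex.
rewrite /neg_coef /pos_coef eta0 mu0 expr0n /= mulr0 !mul0r !add0r.
by rewrite -mulrA ltr_pM2l ?kappa_gt0 // mulrC (Minf_lt_sqr t1 (lam_pm1 x) fx).
Qed.

Lemma solution_ge_inv : ~ (eta = 0 /\ mu = 0) ->
  exists2 c : R, 0 < c & exists2 d0 : R, 0 < d0 & forall (d : R) (f : R -> R),
    0 < d -> d < d0 -> (forall x, 0 < f x) ->
    W2inf_S1 f -> solves_eq n N t eta mu d f -> c * d^-1 <= f 0.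
Proof.
move=> nz; have T0 : 0 < `|t| + 1 by rewrite ltr_wpDl.
have G0 : 0 <= `|gammaN N| + 1 by rewrite addr_ge0.
have [C C0 [X0 hC]] := quadratic_domination kappa_gt0 T0 G0 nz.
have [d0 d00 hd0] := powRN_gt_near0 X0 qexp_gt0.
exists (C `^ (1 / q)); first exact: powR_gt0.
exists d0 => // d f dpos dd0 f0 Wf Ef; apply: (minimum_principle Wf).
apply: aeS (solves_eq_ae_concave dpos f0 Ef) => x /= concave fx; apply: concave.
have hl := lam_pm1 x.
have growth_le : pos_coef (lam x) * (f x `^ q) ^+ 2 <= k * ((`|t| + 1) * f x `^ q) ^+ 2.
  rewrite /pos_coef exprMn [X in _ <= X]mulrA ler_pM2r ?exprn_gt0 ?powR_gt0 //.
  rewrite ler_wpM2l ?(ltW kappa_gt0) // -(real_normK (num_real (t + lam x))).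
  by rewrite ler_pXn2r ?nnegrE ?(ltW T0) ?norm_add_pm1_le.
apply: (le_lt_trans growth_le); rewrite /neg_coef -addrA.
apply: (hC _ _ _ (hd0 d dpos dd0) (norm_add_pm1_le _ hl) (powR_gt0 _ (f0 x))).
exact: powR_lt_mul_inv qexp_gt0 (ltW C0) dpos (ltW (f0 x)) fx.
Qed.

End Equation.

Theorem lemma3p14 (R : realType) (n : nat) (N : R -> R) (t eta mu : R)
    (psi : R -> R -> R) :
  (3 <= n)%N ->
  smooth N -> periodic2pi N -> (forall x, 0 < N x) ->
  (forall d : R, 0 < d ->
     (forall x, 0 < psi d x) /\ W2inf_S1 (psi d) /\ solves_eq n N t eta mu d (psi d)) ->
  `|t| != 1 ->
  ((eta = 0 /\ mu = 0) -> forall d : R, 0 < d -> psi d 0 <= Minf n N t) /\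
  (~ (eta = 0 /\ mu = 0) ->
     exists c : R, 0 < c /\
       exists d0 : R, 0 < d0 /\
         forall d : R, 0 < d -> d < d0 -> c * d^-1 <= psi d 0).
Proof.
move=> n3 _ _ _ hpsi t1; split.
  move=> [eta0 mu0] d d0; have [f0 [Wf Ef]] := hpsi d d0.
  exact: (solution_le_Minf n3 eta0 mu0 t1 d0 f0 Wf Ef).
move=> nz; have [c c0 [d0 d00 hc]] := solution_ge_inv N t n3 nz.
exists c; split => //; exists d0; split => // d dpos dd0.
by have [f0 [Wf Ef]] := hpsi d dpos; exact: hc.
Qed.
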